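(* Let $\mathcal G=(V_{\min},V_{\max},E,w,\lambda)$ be a discounted payoff game, $\sigma$ a joint strategy, and $\nu$ a basis valuation of $H$ minimising $f_\sigma$ over all solutions of $H$. Assume there are no local improvements of $\sigma$ for $\nu$, i.e. $\mathsf{offset}(\nu,(v,v'))\ge\mathsf{offset}(\nu,(v,\sigma(v)))$ for all $(v,v')\in E$. Let $E'$ be any set of edges with $E_\nu\subseteq E'\subseteq S^\sigma_\nu$ that contains an outgoing edge of every vertex. If $\nu$ does not define strategies for both players, then there is a joint strategy $\sigma'$ that is better than $\sigma$ and satisfies $(v,\sigma'(v))\in E'$ for all $v\in V$.
   Context: A discounted payoff game is a tuple $\mathcal G=(V_{\min},V_{\max},E,w,\lambda)$ with $V=V_{\min}\cup V_{\max}$ finite (disjoint union of Min and Max vertices), $E\subseteq V\times V$ with every vertex having an outgoing edge, $w:E\to\mathbb R$, $\lambda:E\to[0,1)$. A joint strategy is a map $\sigma:V\to V$ with $(v,\sigma(v))\in E$ for all $v$. $H$ is the system of inequations over $x\in\mathbb R^V$ containing, for each edge $e=(v,v')$, the inequation $I_e$: $x(v)\ge w_e+\lambda_e x(v')$ if $v\in V_{\max}$ and $x(v)\le w_e+\lambda_e x(v')$ if $v\in V_{\min}$. A basis of $H$ is a set of $|V|$ inequations of $H$ whose equality versions have a unique common solution; if that solution satisfies $H$ it is the basis valuation. $\mathsf{offset}(x,(v,v'))=x(v)-(w_{(v,v')}+\lambda_{(v,v')}x(v'))$ if $v\in V_{\max}$, and $(w_{(v,v')}+\lambda_{(v,v')}x(v'))-x(v)$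 otherwise; $f_\sigma(x)=\sum_{v\in V}\mathsf{offset}(x,(v,\sigma(v)))$. $S^\sigma_\nu=\{(v,v')\in E\mid \mathsf{offset}(\nu,(v,v'))=\mathsf{offset}(\nu,(v,\sigma(v)))\}$ (stale edges) and $E_\nu=\{(v,v')\in E\mid\mathsf{offset}(\nu,(v,v'))=0\}$. A valuation $x$ defines strategies for both players if every vertex $v$ has an outgoing edge $e$ with $I_e$ holding with equality at $x$. A joint strategy $\sigma'$ is better than $\sigma$ iff $\min\{f_{\sigma'}(x)\mid x \text{ solves } H\}<\min\{f_{\sigma}(x)\mid x\text{ solves } H\}$. *)

From HB Require Import structures.
From mathcomp Require Import all_boot all_order all_algebra.
From mathcomp Require Import boolp classical_sets reals.
Set Implicit Arguments. Unset Strict Implicit. Unset Printing Implicit Defensive.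
Import Order.TTheory GRing.Theory Num.Theory.
Local Open Scope ring_scope.
Local Open Scope classical_set_scope.

(* A discounted payoff game on a finite vertex set V:
   - isMax v : v is a Max vertex (V_max); otherwise v is a Min vertex (V_min),
     so V is the disjoint union of V_min and V_max;
   - E : rel V is the edge relation;
   - w, lam : V -> V -> R give weight and discount of each edge (only their
     values on edges matter). *)
Section Game.
Variables (R : realType) (V : finType) (isMax : pred V) (E : rel V)
          (w lam : V -> V -> R).

Definition game_ok : Prop :=
  (forall v, exists v', E v v') /\
  (forall v v', E v v' -> 0 <= lam v v' /\ lam v v' < 1).

Definition joint_strategy (s : V -> V) : Prop := forall v, E v (s v).

Definition ineq_holds (x : V -> R) (v v' : V) : Prop :=
  if isMax v then x v >= w v v' + lam v v' * x v'
  else x v <= w v v' + lam v v' * x v'.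

Definition eq_holds (x : V -> R) (v v' : V) : Prop :=
  x v = w v v' + lam v v' * x v'.

Definition solves_H (x : V -> R) : Prop :=
  forall v v', E v v' -> ineq_holds x v v'.

Definition basis_valuation (nu : V -> R) : Prop :=
  solves_H nu /\
  exists B : {set V * V},
    [/\ forall e, e \in B -> E e.1 e.2,
        #|B| = #|V|,
        forall e, e \in B -> eq_holds nu e.1 e.2 &
        forall x, (forall e, e \in B -> eq_holds x e.1 e.2) -> x = nu].

Definition offset (x : V -> R) (v v' : V) : R :=
  if isMax v then x v - (w v v' + lam v v' * x v')
  else (w v v' + lam v v' * x v') - x v.

Definition f_ (s : V -> V) (x : V -> R) : R := \sum_(v : V) offset x v (s v).

Definition stale (s : V -> V) (nu : V -> R) (v v' : V) : Prop :=
  E v v' /\ offset nu v v' = offset nu v (s v).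

Definition tight_edge (nu : V -> R) (v v' : V) : Prop :=
  E v v' /\ offset nu v v' = 0.

Definition defines_strategies (x : V -> R) : Prop :=
  forall v, exists v', E v v' /\ eq_holds x v v'.

(* min { f_s(x) | x solves H }, rendered as the infimum (the minimum exists
   by LP theory whenever the game is well formed and H is feasible) *)
Definition minval (s : V -> V) : R := inf [set f_ s x | x in solves_H].

Definition better (s' s : V -> V) : Prop := minval s' < minval s.

End Game.

From Pilot Require Import Defs.
From HB Require Import structures.
From mathcomp Require Import all_boot all_order all_algebra.
From mathcomp Require Import boolp classical_sets reals.
From mathcomp Require Import functions interval_inference topology normedtype.
From mathcomp Require Import sequences matrix_normedtype complete_normed_module.
From mathcomp Require Import ring lra.
Set Implicit Arguments.
Unset Strict Implicit.
Unset Printing Implicit Defensive.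
Import Order.TTheory GRing.Theory Num.Theory.
Local Open Scope ring_scope.

(* Move nu in a direction d given by an optimal valuation of an auxiliary
   discounted game: at a vertex with a tight edge only tight edges may be
   played, with weight 0; at any other vertex every edge of E' may be played,
   with weight -1 for Max and 1 for Min.  Optimality of d makes its
   homogeneous offsets (all weights set to 0) nonnegative on tight edges, so
   a small step t d keeps nu feasible, while along an optimal strategy sigma'
   of the auxiliary game these offsets are 0 at vertices with a tight edge
   and -1 elsewhere.  Some vertex has no tight edge because nu does not
   define strategies, hence f_sigma' strictly decreases from
   f_sigma'(nu) = f_sigma(nu), the equality holding because E' consists of
   stale edges.  The optimal valuation is the fixed point of the Bellman
   operator, a sup-norm contraction since all discounts are below 1. *)

(* Matrices are complete and normed in the library, but the join of the two
   structures, needed by the Banach fixed point theorem, is not declared. *)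
HB.instance Definition _ (R : realType) (n : nat) := Complete.on 'rV[R]_n.

Local Notation zero_weight := (fun _ _ => 0).

Lemma sup_contraction_fixpoint (R : realType) (V : finType)
    (T : (V -> R) -> V -> R) (q : R) :
  0 <= q -> q < 1 ->
  (forall g h N, (forall u, `|g u - h u| <= N) ->
     forall v, `|T g v - T h v| <= q * N) ->
  exists d, forall v, T d v = d v.
Proof.
move=> q_ge0 q_lt1 T_lip.
pose fun_of (y : 'rV[R]_#|V|) u := y ord0 (enum_rank u).
pose F y : 'rV[R]_#|V| := \row_i T (fun_of y) (enum_val i).
have entry_le y u : `|fun_of y u| <= `|y|.
  rewrite [leRHS]/Num.norm /= mx_normrE.
  exact: (le_bigmax _ (fun ij : 'I_1 * 'I_#|V| => `|y ij.1 ij.2|) (ord0, _)).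
have F_lip y z : `|F y - F z| <= q * `|y - z|.
  rewrite [leLHS]/Num.norm /= mx_normrE.
  apply: bigmax_le => [|[i j] _ /=]; first exact: mulr_ge0.
  rewrite !mxE; apply: T_lip => u.
  by have := entry_le (y - z) u; rewrite /fun_of !mxE.
have F_ctr : is_contraction
    (totalfun F : {fun [set: 'rV[R]_#|V|] >-> [set: 'rV[R]_#|V|]}).
  by exists (NngNum q_ge0); split=> // -[y z] _; exact: F_lip.
have [|p _ Fp] := banach_fixed_point F_ctr closedT; first by exists 0.
by exists (fun_of p) => v; rewrite [in RHS]Fp /fun_of mxE enum_rankK.
Qed.

Lemma exists_pos_step (R : realFieldType) (I : finType) (P : pred I)
    (a b : I -> R) :
  (forall i, P i -> 0 < a i) ->
  exists2 t, 0 < t & forall i, P i -> t * b i <= a i.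
Proof.
move=> a_gt0; pose S := \sum_(i | P i) `|b i| / a i.
have S_ge0 : 0 <= S by apply: sumr_ge0 => i /a_gt0 /ltW ?; exact: divr_ge0.
exists (1 + S)^-1 => [|i Pi]; first by rewrite invr_gt0; lra.
have bS : `|b i| / a i <= S.
  rewrite /S (bigD1 i) //= lerDl; apply: sumr_ge0 => j /andP[/a_gt0 /ltW ? _].
  exact: divr_ge0.
rewrite mulrC ler_pdivrMr; last lra.
rewrite ler_pdivrMr ?a_gt0 // in bS.
have := ler_norm (b i); have := a_gt0 _ Pi; nra.
Qed.

Section DiscountedGameValue.
Variables (R : realType) (V : finType) (isMax : pred V) (A : rel V)
  (w lam : V -> V -> R).
Hypothesis A_total : forall v, exists v', A v v'.
Hypothesis lam_range : forall v v', A v v' -> 0 <= lam v v' < 1.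

Let move0 v := odflt v [pick v' | A v v'].

Let move0P v : A v (move0 v).
Proof.
rewrite /move0; case: pickP => [//|noA].
by have [v' Av'] := A_total v; move: (noA v'); rewrite Av'.
Qed.

Let q := \big[Num.max/0]_(e : V * V | A e.1 e.2) lam e.1 e.2.

Let q_ge0 : 0 <= q. Proof. exact: bigmax_ge_id. Qed.

Let q_lt1 : q < 1.
Proof. by apply: bigmax_lt => // e /lam_range /andP[]. Qed.

Let lam_le_q v v' : A v v' -> 0 <= lam v v' <= q.
Proof.
move=> Avv'; have /andP[-> _] := lam_range Avv'.
exact: (le_bigmax_cond _ (P := fun e : V * V => A e.1 e.2) (j := (v, v'))).
Qed.

Definition bellman (g : V -> R) (v : V) : R :=
  let F j := w v j + lam v j * g j in
  F (if isMax v then [arg max_(j > move0 v | A v j) F j]%O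
     else [arg min_(j < move0 v | A v j) F j]%O).

Lemma bellman_lipschitz g h (N : R) : (forall u, `|g u - h u| <= N) ->
  forall v, `|bellman g v - bellman h v| <= q * N.
Proof.
move=> gh_le v; have N_ge0 : 0 <= N := le_trans (normr_ge0 _) (gh_le v).
have step_le j : A v j ->
    `|(w v j + lam v j * g j) - (w v j + lam v j * h j)| <= q * N.
  move=> /lam_le_q /andP[lam_ge0 lam_le].
  rewrite opprD addrACA subrr add0r -mulrBr normrM ger0_norm //.
  exact: ler_pM (gh_le j).
rewrite /bellman; case: ifP => _.
- case: arg_maxP => [|a Aa a_max]; first exact: move0P.
  case: arg_maxP => [|b Ab b_max]; first exact: move0P.
  move: (a_max b Ab) (b_max a Aa) (step_le a Aa) (step_le b Ab).
  by rewrite /= !ler_norml => ? ? /andP[? ?] /andP[? ?]; apply/andP; split; lra.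
- case: arg_minP => [|a Aa a_min]; first exact: move0P.
  case: arg_minP => [|b Ab b_min]; first exact: move0P.
  move: (a_min b Ab) (b_min a Aa) (step_le a Aa) (step_le b Ab).
  by rewrite /= !ler_norml => ? ? /andP[? ?] /andP[? ?]; apply/andP; split; lra.
Qed.

Lemma bellman_fixpoint_optimal d : (forall v, bellman d v = d v) ->
  solves_H isMax A w lam d /\ defines_strategies A w lam d.
Proof.
move=> d_fix; split.
- move=> v v' Avv'; rewrite /ineq_holds -[d v]d_fix /bellman; case: (isMax v).
  + by case: arg_maxP => [|a _ a_max]; [exact: move0P | exact: a_max _ Avv'].
  + by case: arg_minP => [|a _ a_min]; [exact: move0P | exact: a_min _ Avv'].
- move=> v; rewrite /Defs.eq_holds -[d v]d_fix /bellman.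
  case: (isMax v); [case: arg_maxP | case: arg_minP];
    by [exact: move0P | move=> a Aa _; exists a].
Qed.

Lemma discounted_game_optimal_valuation :
  exists d, solves_H isMax A w lam d /\ defines_strategies A w lam d.
Proof.
have [d d_fix] := sup_contraction_fixpoint q_ge0 q_lt1 bellman_lipschitz.
by exists d; exact: bellman_fixpoint_optimal.
Qed.

End DiscountedGameValue.

Section Offsets.
Variables (R : realType) (V : finType) (isMax : pred V) (E : rel V)
  (w lam : V -> V -> R).

Lemma ineq_holds_offset x v v' :
  ineq_holds isMax w lam x v v' <-> 0 <= offset isMax w lam x v v'.
Proof. by rewrite /ineq_holds /offset; case: (isMax v); rewrite subr_ge0. Qed.

Lemma eq_holds_offset x v v' :
  Defs.eq_holds w lam x v v' <-> offset isMax w lam x v v' = 0.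
Proof.
rewrite /Defs.eq_holds /offset; split=> [->|/eqP].
  by case: (isMax v); rewrite subrr.
by case: (isMax v); rewrite subr_eq0 => /eqP.
Qed.

Lemma offset_weight x v v' : offset isMax w lam x v v' =
  offset isMax zero_weight lam x v v' + (if isMax v then - w v v' else w v v').
Proof. by rewrite /offset; case: (isMax v); ring. Qed.

Lemma offset_translate x y t v v' :
  offset isMax w lam (fun u => x u + t * y u) v v' =
  offset isMax w lam x v v' + t * offset isMax zero_weight lam y v v'.
Proof. by rewrite /offset; case: (isMax v); ring. Qed.

Lemma f_translate s x y t :
  f_ isMax w lam s (fun u => x u + t * y u) =
  f_ isMax w lam s x + t * f_ isMax zero_weight lam s y.
Proof.
rewrite /f_ mulr_sumr -big_split /=.
by apply: eq_bigr => v _; rewrite offset_translate.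
Qed.

Lemma minval_le_f s x : joint_strategy E s -> solves_H isMax E w lam x ->
  minval isMax E w lam s <= f_ isMax w lam s x.
Proof.
move=> s_E x_sol; apply: ge_inf; last by exists x.
exists 0 => _ [y y_sol <-]; apply: sumr_ge0 => v _.
exact/ineq_holds_offset/y_sol/s_E.
Qed.

Lemma f_le_minval s x : solves_H isMax E w lam x ->
  (forall y, solves_H isMax E w lam y ->
     f_ isMax w lam s x <= f_ isMax w lam s y) ->
  f_ isMax w lam s x <= minval isMax E w lam s.
Proof.
move=> x_sol x_min; apply: lb_le_inf; first by exists (f_ isMax w lam s x), x.
by move=> _ [y y_sol <-]; exact: x_min.
Qed.

Lemma solves_H_translate x y : solves_H isMax E w lam x ->
  (forall v v', E v v' -> offset isMax w lam x v v' = 0 ->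
     0 <= offset isMax zero_weight lam y v v') ->
  exists2 t, 0 < t & solves_H isMax E w lam (fun u => x u + t * y u).
Proof.
move=> x_sol y_tight.
pose slack (e : V * V) := E e.1 e.2 && (offset isMax w lam x e.1 e.2 != 0).
have slack_gt0 e : slack e -> 0 < offset isMax w lam x e.1 e.2.
  case/andP=> Ee off_neq0; rewrite lt_def off_neq0.
  exact/ineq_holds_offset/x_sol.
have [t t_gt0 t_le] :=
  exists_pos_step (fun e => - offset isMax zero_weight lam y e.1 e.2) slack_gt0.
exists t => // v v' Evv'; apply/ineq_holds_offset; rewrite offset_translate.
have [off0|off_neq0] := eqVneq (offset isMax w lam x v v') 0.
  by rewrite off0 add0r mulr_ge0 ?(ltW t_gt0) ?y_tight.
have := t_le (v, v'); rewrite /slack /= Evv' off_neq0 mulrN => /(_ isT); lra.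
Qed.

End Offsets.

Section DirectionGame.
Variables (R : realType) (V : finType) (isMax : pred V) (E E' : rel V)
  (w lam : V -> V -> R) (nu : V -> R).
Hypothesis lam_range : forall v v', E v v' -> 0 <= lam v v' < 1.
Hypothesis E'_sub : forall v v', E' v v' -> E v v'.
Hypothesis tight_sub : forall v v', tight_edge isMax E w lam nu v v' -> E' v v'.
Hypothesis E'_total : forall v, exists v', E' v v'.

Definition is_tight v v' := E v v' && (offset isMax w lam nu v v' == 0).

Definition has_tight_edge v := [exists v', is_tight v v'].

Definition dir_move v v' := E' v v' && (has_tight_edge v ==> is_tight v v').

Definition dir_weight v (v' : V) : R :=
  if has_tight_edge v then 0 else if isMax v then -1 else 1.

Lemma dir_move_total v : exists v', dir_move v v'.
Proof.
have [/existsP[v' tight_vv']|no_tight] := boolP (has_tight_edge v).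
  exists v'; rewrite /dir_move tight_vv' implybT andbT; apply: tight_sub.
  by case/andP: tight_vv' => Evv' /eqP.
have [v' E'vv'] := E'_total v.
by exists v'; rewrite /dir_move E'vv' (negbTE no_tight).
Qed.

Lemma dir_move_lam v v' : dir_move v v' -> 0 <= lam v v' < 1.
Proof. by case/andP=> /E'_sub /lam_range. Qed.

Lemma offset_dir_weight d v v' :
  offset isMax dir_weight lam d v v' =
  offset isMax zero_weight lam d v v' + (~~ has_tight_edge v)%:R.
Proof.
by rewrite offset_weight /dir_weight; case: (has_tight_edge v); case: (isMax v);
  rewrite /=; ring.
Qed.

Lemma exists_no_tight_edge : ~ defines_strategies E w lam nu ->
  exists v0, ~~ has_tight_edge v0.
Proof.
move=> no_strat; apply/existsP; rewrite -negb_forall.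
apply/negP => /forallP all_tight.
apply: no_strat => v; have /existsP[v' /andP[Evv' /eqP off0]] := all_tight v.
by exists v'; split=> //; exact/(eq_holds_offset isMax).
Qed.

Lemma exists_improving_direction : ~ defines_strategies E w lam nu ->
  exists d s', [/\ forall v, E' v (s' v),
    forall v v', E v v' -> offset isMax w lam nu v v' = 0 ->
      0 <= offset isMax zero_weight lam d v v' &
    f_ isMax zero_weight lam s' d < 0].
Proof.
move=> /exists_no_tight_edge[v0 v0_slack].
have [d [d_sol d_strat]] :=
  discounted_game_optimal_valuation isMax dir_weight dir_move_total dir_move_lam.
have [s' s'_opt] := choice d_strat.
exists d, s'; split.
- by move=> v; have [/andP[]] := s'_opt v.
- move=> v v' Evv' off0.
  have tight_vv' : is_tight v v' by rewrite /is_tight Evv' off0 eqxx.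
  have tight_v : has_tight_edge v by apply/existsP; exists v'.
  have dir_vv' : dir_move v v'.
    by rewrite /dir_move tight_v tight_vv' (tight_sub (conj Evv' off0)).
  have /ineq_holds_offset := d_sol v v' dir_vv'.
  by rewrite offset_dir_weight tight_v addr0.
- have s'_slope v :
      offset isMax zero_weight lam d v (s' v) = - (~~ has_tight_edge v)%:R.
    have [_ /(eq_holds_offset isMax)] := s'_opt v; rewrite offset_dir_weight; lra.
  rewrite /f_ (eq_bigr _ (fun v _ => s'_slope v)) sumrN oppr_lt0 (bigD1 v0) //=.
  by rewrite v0_slack ltr_pwDl // sumr_ge0.
Qed.

End DirectionGame.

Theorem lemma4p3 (R : realType) (V : finType) (isMax : pred V) (E : rel V)
    (w lam : V -> V -> R)
    (Hgame : game_ok E lam)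
    (sigma : V -> V) (Hsigma : joint_strategy E sigma)
    (nu : V -> R)
    (Hbasis : basis_valuation isMax E w lam nu)
    (Hmin : forall x, solves_H isMax E w lam x ->
              f_ isMax w lam sigma nu <= f_ isMax w lam sigma x)
    (Hnoloc : forall v v', E v v' ->
              offset isMax w lam nu v (sigma v) <= offset isMax w lam nu v v')
    (E' : rel V)
    (HE'low : forall v v', tight_edge isMax E w lam nu v v' -> E' v v')
    (HE'up : forall v v', E' v v' -> stale isMax E w lam sigma nu v v')
    (HE'out : forall v, exists v', E' v v')
    (Hnodef : ~ defines_strategies E w lam nu) :
  exists sigma' : V -> V,
    [/\ joint_strategy E sigma',
        better isMax E w lam sigma' sigma &
        forall v, E' v (sigma' v)].
Proof.
have lam_range v v' : E v v' -> 0 <= lam v v' < 1.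
  by move=> /Hgame.2[-> ->].
have E'_sub v v' : E' v v' -> E v v' by case/HE'up.
have [d [s' [s'_E' d_tight fd_lt0]]] :=
  exists_improving_direction lam_range E'_sub HE'low HE'out Hnodef.
have [t t_gt0 x_sol] := solves_H_translate Hbasis.1 d_tight.
have s'_E v : E v (s' v) by exact/E'_sub/s'_E'.
have f_stale : f_ isMax w lam s' nu = f_ isMax w lam sigma nu.
  by apply: eq_bigr => v _; have [] := HE'up _ _ (s'_E' v).
exists s'; split=> //; rewrite /better.
apply: le_lt_trans (minval_le_f s'_E x_sol) _.
apply: lt_le_trans (f_le_minval Hbasis.1 Hmin).
by rewrite f_translate f_stale gtrDl pmulr_rlt0.
Qed.
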